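(* Let $k\ge1$ and let $w_1,w_2\in\mathcal V_k$ be such that $(w_1,w_2)$ is a weak CLT pair. Then $\mathrm{wt}((w_1,w_2))\le k$ if $k$ is odd, and $\mathrm{wt}((w_1,w_2))\le k-1$ if $k$ is even.
   Context: A word is a finite sequence $w=(s_1,\dots,s_m)$ of positive integers; $\ell(w)=m$; closed if $s_1=s_m$; $\mathrm{supp}(w)$ its letter set. $E_w=\{\{s_i,s_{i+1}\}:1\le i\le m-1\}$ (undirected edges); a self edge is $\{u,u\}$. $N_e^w=\#\{i\le m-1:\{s_i,s_{i+1}\}=e\}$. For $a=(w_1,w_2)$: $\mathrm{wt}(a)=\#(\mathrm{supp}(w_1)\cup\mathrm{supp}(w_2))$, $E_a=E_{w_1}\cup E_{w_2}$, $N_e^a=N_e^{w_1}+N_e^{w_2}$. A weak CLT pair is a pair with $N_e^a\ge2$ for all $e\in E_a$ and $E_{w_1}\cap E_{w_2}\ne\emptyset$. $\mathcal V_k$ is the set of closed words of length $k+1$ whose first letter is $1$ and which have at least one self edge. *)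

From mathcomp Require Import all_boot.
Set Implicit Arguments. Unset Strict Implicit. Unset Printing Implicit Defensive.

(* A word is a finite sequence of positive integers, represented by seq nat
   together with the positivity side condition [all (fun s => 0 < s) w]. *)

(* Undirected edge {u,v}, normalised as the ordered pair (min, max). *)
Definition uedge (u v : nat) : nat * nat := (minn u v, maxn u v).

Definition edge_list (w : seq nat) : seq (nat * nat) :=
  [seq uedge p.1 p.2 | p <- zip w (behead w)].

(* E_w as a predicate: e \in edge_list w. *)
Definition Nw (e : nat * nat) (w : seq nat) : nat := count_mem e (edge_list w).

Definition is_word (w : seq nat) : bool := all (fun s => 0 < s) w.

Definition closed_word (w : seq nat) : bool :=
  (0 < size w) && (head 0 w == last 0 w).

Definition self_edge (e : nat * nat) : bool := e.1 == e.2.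

Definition has_self_edge (w : seq nat) : bool := has self_edge (edge_list w).

Definition in_Vk (k : nat) (w : seq nat) : bool :=
  [&& is_word w, size w == k.+1, closed_word w, head 0 w == 1
    & has_self_edge w].

Definition wt (w1 w2 : seq nat) : nat := size (undup (w1 ++ w2)).

Definition Npair (e : nat * nat) (w1 w2 : seq nat) : nat := Nw e w1 + Nw e w2.

Definition weak_CLT_pair (w1 w2 : seq nat) : Prop :=
  (forall e, e \in edge_list w1 ++ edge_list w2 -> 2 <= Npair e w1 w2) /\
  (exists e, (e \in edge_list w1) && (e \in edge_list w2)).

From mathcomp Require Import all_boot.
From mathcomp Require Import zify.

Set Implicit Arguments.
Unset Strict Implicit.
Unset Printing Implicit Defensive.

(* Let G be the graph with the edges of w1 and w2 (loops included).  Both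
   walks start at 1, so G is connected and has at most one more vertex than
   it has distinct non-loop edges (links).  Every edge is traversed at least
   twice in the 2k steps of the two walks, and each walk traverses a loop,
   so there are at most k - 1 links: wt <= k.  If wt = k every inequality is
   tight: the links form a tree, hence G is bipartite up to loops, and w1
   traverses exactly one loop.  A closed walk in a bipartite graph uses an
   even number of links, so the length k of w1 is odd. *)

Definition nverts (V : seq nat) : nat := size (undup V).

Definition nlinks (E : seq (nat * nat)) : nat :=
  size (undup (filter (predC self_edge) E)).

Definition covers (V : seq nat) (E : seq (nat * nat)) : Prop :=
  {in E, forall e, (e.1 \in V) && (e.2 \in V)}.

Definition two_coloring (c : nat -> bool) (E : seq (nat * nat)) : Prop :=
  {in E, forall e, ~~ self_edge e -> c e.1 != c e.2}.

Definition colorable (E : seq (nat * nat)) : Prop := exists c, two_coloring c E.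

Lemma double_size_undup_filter_le (T : eqType) (p : pred T) (s : seq T) :
  {in s, forall x, 1 < count_mem x s} -> 2 * size (undup (filter p s)) <= count p s.
Proof.
move=> mult2.
rewrite -sum1_count -big_undup_iterop_count -filter_undup size_filter -sum1_count.
rewrite big_distrr /= big_seq_cond [X in _ <= X]big_seq_cond.
apply: leq_sum => x /andP[xs _]; rewrite Monoid.iteropE iter_addn_0 mul1n muln1.
by rewrite mult2 // -mem_undup.
Qed.

Lemma size_undup_cons (T : eqType) (y : T) (s : seq T) :
  size (undup (y :: s)) = size (undup s) + (y \notin s).
Proof. by rewrite /=; case: (y \in s); rewrite /= ?addn0 ?addn1. Qed.

Lemma nlinks_cons e E :
  nlinks (e :: E) = nlinks E + (~~ self_edge e && (e \notin E)).
Proof.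
rewrite /nlinks /=; have [loop|link] := boolP (self_edge e); first by rewrite addn0.
by rewrite size_undup_cons mem_filter /= link.
Qed.

Lemma edge_list_cons2 x y w : edge_list (x :: y :: w) = uedge x y :: edge_list (y :: w).
Proof. by []. Qed.

Lemma size_edge_list w : size (edge_list w) = (size w).-1.
Proof. by case: w => [|x w] //; rewrite size_map size_zip /= minnE; lia. Qed.

Lemma self_edge_uedge x y : self_edge (uedge x y) = (x == y).
Proof. by rewrite /self_edge /uedge /=; apply/eqP/eqP; lia. Qed.

Lemma uedge_ends x y :
  (uedge x y).1 \in [:: x; y] /\ (uedge x y).2 \in [:: x; y].
Proof. by rewrite /uedge; case: (leqP x y); rewrite !inE !eqxx ?orbT. Qed.

Lemma mem_uedge_ends x y : y \in [:: (uedge x y).1; (uedge x y).2].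
Proof. by rewrite /uedge !inE; case: (leqP x y) => _; rewrite eqxx ?orbT. Qed.

Lemma uedge_colors (c : nat -> bool) x y :
  (c (uedge x y).1 != c (uedge x y).2) = (c x != c y).
Proof. by rewrite /uedge; case: (leqP x y) => //; rewrite eq_sym. Qed.

Section WalkStep.

Variables (x y : nat) (V : seq nat) (E : seq (nat * nat)).
Hypotheses (xV : x \in V) (covVE : covers V E).

Lemma covers_step : covers (y :: V) (uedge x y :: E).
Proof.
move=> e; rewrite inE => /orP[/eqP->|/covVE/andP[e1 e2]]; last by rewrite !inE e1 e2 !orbT.
have [] := uedge_ends x y; rewrite !inE.
by do 2!case/orP=> /eqP->; rewrite ?eqxx ?xV ?orbT.
Qed.

Lemma nlinks_step_new : y \notin V -> nlinks (uedge x y :: E) = (nlinks E).+1.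
Proof.
move=> yV; rewrite nlinks_cons self_edge_uedge.
have -> : x != y by apply: contraNneq yV => <-.
suff -> : uedge x y \notin E by rewrite addn1.
apply: contra yV => /covVE/andP[e1 e2].
by move: (mem_uedge_ends x y); rewrite !inE => /orP[]/eqP->.
Qed.

Let recolor (c : nat -> bool) (z : nat) : bool := if z == y then ~~ c x else c z.

Lemma two_coloring_step_new c : y \notin V -> two_coloring c E ->
  two_coloring (recolor c) (uedge x y :: E).
Proof.
move=> yV colE e; rewrite inE => /orP[/eqP->|eE].
  rewrite uedge_colors self_edge_uedge /recolor eqxx => nxy.
  by rewrite ifN //; case: (c x).
have /covVE/andP[e1 e2] := eE.
by rewrite /recolor !ifN; first exact: colE; apply: contraNneq yV => <-.
Qed.

Lemma walk_step :
  nverts (y :: V) + nlinks E <= nverts V + nlinks (uedge x y :: E) /\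
  (nverts (y :: V) + nlinks E = nverts V + nlinks (uedge x y :: E) ->
   colorable E -> colorable (uedge x y :: E)).
Proof.
rewrite /nverts size_undup_cons; have [yV|yV] := boolP (y \in V).
  rewrite nlinks_cons /=; split; first lia.
  move=> tight [c colE]; exists c => e; rewrite inE => /orP[/eqP->|]; last exact: colE.
  by move=> nself; apply: colE; move: tight; rewrite nself /=; case: (_ \in E) => //=; lia.
rewrite nlinks_step_new //; split=> [|_ [c colE]]; first lia.
by exists (recolor c); apply: two_coloring_step_new.
Qed.

End WalkStep.

(* Along a walk #links - #vertices never decreases; while it stays constant
   every step traverses a loop, revisits a link or hangs a new leaf, so a
   2-coloring of the links extends. *)
Lemma walk_links_vertices (x : nat) (w V : seq nat) (E : seq (nat * nat)) :
  x \in V -> covers V E ->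
  [/\ covers (rev w ++ V) (rev (edge_list (x :: w)) ++ E),
      nverts (rev w ++ V) + nlinks E
        <= nverts V + nlinks (rev (edge_list (x :: w)) ++ E) &
      nverts (rev w ++ V) + nlinks E
        = nverts V + nlinks (rev (edge_list (x :: w)) ++ E) ->
      colorable E -> colorable (rev (edge_list (x :: w)) ++ E)].
Proof.
elim: w x V E => [|y w IH] x V E xV covVE; first by split.
rewrite edge_list_cons2 !rev_cons !cat_rcons.
have [le1 eq1] := walk_step y xV covVE.
have [cov2 le2 eq2] := IH y (y :: V) _ (mem_head _ _) (covers_step xV covVE).
split=> [//||tight colE]; first lia.
by apply: eq2 => //; [lia | apply: eq1 => //; lia].
Qed.

Lemma wt_le_nlinks (x : nat) (t1 t2 : seq nat) :
  let L := edge_list (x :: t1) ++ edge_list (x :: t2) in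
  wt (x :: t1) (x :: t2) <= (nlinks L).+1 /\
  (wt (x :: t1) (x :: t2) = (nlinks L).+1 -> colorable (edge_list (x :: t1))).
Proof.
move=> L.
have cov0 : covers [:: x] [::] by [].
have [cov1 le1 eq1] := walk_links_vertices (V := [:: x]) t1 (mem_head _ _) cov0.
have x1 : x \in rev t1 ++ [:: x] by rewrite mem_cat mem_head orbT.
have [_ le2 _] := walk_links_vertices (V := rev t1 ++ [:: x]) t2 x1 cov1.
have wtE : wt (x :: t1) (x :: t2) = nverts (rev t2 ++ rev t1 ++ [:: x]).
  apply/perm_size/perm_undup => z; rewrite !(mem_cat, mem_rev, inE).
  by case: (z == x); case: (z \in t1); case: (z \in t2).
have linksE : nlinks (rev (edge_list (x :: t2)) ++ rev (edge_list (x :: t1)) ++ [::])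
    = nlinks L.
  apply/perm_size/perm_undup => e; rewrite !(mem_filter, mem_cat, mem_rev) orbF.
  by case: (~~ self_edge e); case: (e \in edge_list _); case: (e \in edge_list _).
have nv0 : nverts [:: x] = 1 by [].
have nl0 : nlinks [::] = 0 by [].
rewrite wtE -linksE; split=> [|tight]; first lia.
have tight1 : nverts (rev t1 ++ [:: x]) + nlinks [::]
    = nverts [:: x] + nlinks (rev (edge_list (x :: t1)) ++ [::]) by lia.
have [c colE] : colorable (rev (edge_list (x :: t1)) ++ [::]) by apply: eq1 => //; exists xpred0.
by exists c => e eE; apply: colE; rewrite cats0 mem_rev.
Qed.

Lemma odd_count_links c x w : two_coloring c (edge_list (x :: w)) ->
  odd (count (predC self_edge) (edge_list (x :: w))) = (c x != c (last x w)).
Proof.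
elim: w x => [|y w IH] x; first by rewrite eqxx.
rewrite edge_list_cons2 => colE.
rewrite /= oddD IH => [|e eE]; last by apply: colE; rewrite inE eE orbT.
have := colE _ (mem_head _ _); rewrite self_edge_uedge uedge_colors.
case: eqVneq => [->|_ /(_ isT)] /=; first by case: (c y != _).
by case: (c x); case: (c y); case: (c (last y w)).
Qed.

Lemma odd_closed_walk w : closed_word w -> colorable (edge_list w) ->
  odd (size w).-1 = odd (count self_edge (edge_list w)).
Proof.
case: w => [//|x w] /andP[_ /eqP closed] [c /odd_count_links colE].
rewrite -size_edge_list -(count_predC self_edge) oddD colE.
by move: closed => /= <-; rewrite eqxx addbF.
Qed.

Theorem mainTheorem14 (k : nat) (w1 w2 : seq nat) :
  1 <= k -> in_Vk k w1 -> in_Vk k w2 -> weak_CLT_pair w1 w2 ->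
  (odd k -> wt w1 w2 <= k) /\ (~~ odd k -> wt w1 w2 <= k.-1).
Proof.
move=> _ /and5P[_ /eqP sz1 cl1 /eqP hd1 self1] /and5P[_ /eqP sz2 _ /eqP hd2 self2] [mult2 _].
case: w1 sz1 cl1 hd1 self1 mult2 => [//|x t1] sz1 cl1 /= hd1 self1 mult2.
case: w2 sz2 hd2 self2 mult2 => [//|y t2] sz2 /= hd2 self2 mult2; subst x y.
set L := edge_list (1 :: t1) ++ edge_list (1 :: t2).
have mult2L : {in L, forall e, 1 < count_mem e L} by move=> e /mult2; rewrite count_cat.
have links_le : 2 * nlinks L <= count (predC self_edge) L
  := double_size_undup_filter_le (predC self_edge) mult2L.
have loops1 : 0 < count self_edge (edge_list (1 :: t1)) by rewrite -has_count.
have loops2 : 0 < count self_edge (edge_list (1 :: t2)) by rewrite -has_count.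
have sizeL : count self_edge L + count (predC self_edge) L = 2 * k.
  by rewrite count_predC size_cat !size_edge_list sz1 sz2 /= addnn mul2n.
rewrite count_cat in sizeL.
have [wt_le wt_eq] := wt_le_nlinks 1 t1 t2; rewrite -/L -/(nlinks L) in wt_le wt_eq.
split=> [_|k_even]; first lia.
have /eqP : wt (1 :: t1) (1 :: t2) != k.
  apply: contraNneq k_even => wt_k.
  have tight : wt (1 :: t1) (1 :: t2) = (nlinks L).+1 by lia.
  have one_loop : count self_edge (edge_list (1 :: t1)) = 1 by lia.
  by have := odd_closed_walk cl1 (wt_eq tight); rewrite sz1 one_loop.
lia.
Qed.
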